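(* For every natural number $n\geq 64$, $$\iota(2^n-1)\leq n+1-\sum_{j=1}^{\lfloor \frac{\log n}{\log 2}\rfloor}\xi(n,j)+3\left\lfloor \frac{\log n}{\log 2}\right\rfloor,$$ where $0\leq \xi(n,j)<1$ are the quantities defined in the context.
   Context: An addition chain producing a positive integer $N$ is a sequence $1=s_1,2=s_2,s_3,\ldots,s_k=N$ in which every term after the first is the sum of two (not necessarily distinct) earlier terms; its length is the number of terms excluding the initial $1$ (here $k-1$). $\iota(N)$ denotes the length of the shortest addition chain producing $N$. The quantities $\xi(n,j)$ come from iterated halving of the exponent: set $n_0=n$ and $n_j=\frac{n_{j-1}-\frac{1}{2}(1-(-1)^{n_{j-1}})}{2}$ (i.e. $n_j=\lfloor n/2^j\rfloor$), and write $n_j=\frac{n}{2^j}-\xi(n,j)$; thus e.g. $\xi(n,1)=\frac{1}{4}(1-(-1)^n)$, and $0\leq \xi(n,j)<1$, with $\xi(n,j)=0$ for all $j$ when $n$ is a power of $2$. $\log$ is the natural logarithm and $\lfloor\cdot\rfloor$ the floor function. *)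

From HB Require Import structures.
From mathcomp Require Import all_boot all_order all_algebra.
From mathcomp Require Import boolp reals exp.
Set Implicit Arguments. Unset Strict Implicit. Unset Printing Implicit Defensive.
Import Order.TTheory GRing.Theory Num.Theory.

Definition is_addchain (s : seq nat) : bool :=
  (nth 0 s 0 == 1) &&
  all (fun i => [exists j : 'I_i, exists k : 'I_i,
                   nth 0 s i == nth 0 s j + nth 0 s k])
      (iota 1 (size s).-1).

(* s is an addition chain producing N, of length size s - 1 *)
Definition chain_produces (s : seq nat) (N : nat) : bool :=
  is_addchain s && (0 < size s) && (last 0 s == N).

Definition has_chain_of_length (N k : nat) : bool :=
  `[< exists s : seq nat, chain_produces s N /\ size s = k.+1 >].

Lemma chain_exists (N : nat) : exists k, has_chain_of_length N.+1 k.
Proof.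
exists N; apply/asboolP; exists (iota 1 N.+1); split; last by rewrite size_iota.
have Hn : forall i, i < N.+1 -> nth 0 (iota 1 N.+1) i = i.+1.
  by move=> i Hi; rewrite nth_iota // add1n.
rewrite /chain_produces /is_addchain size_iota (last_nth 0) size_iota.
rewrite (Hn 0) // [nth 0 (0 :: _) _]/= (Hn N) // !eqxx !andbT.
rewrite [true && _]andTb.
apply/allP => i; rewrite mem_iota => /andP [i1 iN].
move: i i1 iN => [|i] // _ iN.
have iN' : i < N by move: iN; rewrite add1n.
apply/fintype.existsP; exists ord_max; apply/fintype.existsP; exists ord0.
rewrite (Hn i.+1) // (Hn (nat_of_ord (@ord_max i))) ?(Hn (nat_of_ord (@ord0 i))) //=.
  by rewrite addn1.
by rewrite ltnW.
Qed.

(* iota_ac N = the length of a shortest addition chain producing N (N >= 1);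
   for N = 0 no chain exists and the value 0 is a junk default. *)
Definition iota_ac (N : nat) : nat :=
  match N with
  | 0 => 0
  | N'.+1 => ex_minn (chain_exists N')
  end.

(* n_j : n_0 = n, n_j = (n_{j-1} - (1 - (-1)^{n_{j-1}})/2) / 2, i.e. halving
   after removing the parity bit (this is n_{j-1} ./2). *)
Fixpoint nhalf (n j : nat) : nat :=
  match j with
  | 0 => n
  | j'.+1 => (nhalf n j' - odd (nhalf n j')) %/ 2
  end.

Local Open Scope ring_scope.

Definition xi {R : realType} (n j : nat) : R :=
  n%:R / 2 ^+ j - (nhalf n j)%:R.

Definition flog2 {R : realType} (n : nat) : int :=
  Num.floor (ln (n%:R : R) / ln 2).

From HB Require Import structures.
From mathcomp Require Import all_boot all_order all_algebra.
From mathcomp Require Import boolp reals exp.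
From mathcomp Require Import zify lra.
Import Order.TTheory GRing.Theory Num.Theory.

(* From a chain ending in 2^h - 1,
   h doublings followed by adding 2^h - 1 reach 2^(2h) - 1 = 2^h (2^h - 1) +
   (2^h - 1) in h + 1 steps, and two more steps (double, add 1) reach
   2^(2h+1) - 1.  Recursing on n./2, i.e. along the binary digits of n, gives
   iota(2^n - 1) <= n + 2 floor(log2 n) + 1.  As every xi(n,j) < 1, the
   right-hand side of the theorem is at least n + 1 + 2 floor(log2 n); so the
   bound holds for every n >= 1, not only n >= 64. *)

Set Implicit Arguments.
Unset Strict Implicit.
Unset Printing Implicit Defensive.

Lemma iota_ac_le s N : chain_produces s N -> (iota_ac N <= (size s).-1)%N.
Proof.
case: N => // N chain_s; rewrite /iota_ac.
case: ex_minnP => k _; apply; apply/asboolP; exists s; split => //.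
by move: chain_s => /andP[/andP[_ s_gt0] _]; rewrite prednK.
Qed.

Lemma chain_produces_memN s N : chain_produces s N -> N \in s.
Proof. by case: s => // x s /andP[_ /eqP <-]; exact: mem_last. Qed.

Lemma chain_produces_mem1 s N : chain_produces s N -> 1%N \in s.
Proof. by move=> /andP[/andP[/andP[/eqP s0 _] s_gt0] _]; rewrite -s0 mem_nth. Qed.

Lemma chain_produces_rcons s N a b : chain_produces s N -> a \in s -> b \in s ->
  chain_produces (rcons s (a + b)) (a + b).
Proof.
move=> /andP[/andP[/andP[s0 /allP sums] s_gt0] _] a_s b_s.
rewrite /chain_produces /is_addchain size_rcons last_rcons nth_rcons s_gt0 s0.
rewrite eqxx andbT /= andbT; apply/allP => i; rewrite mem_iota add1n ltnS.
case/andP=> i_gt0; rewrite leq_eqVlt => /orP[/eqP -> | i_lt].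
  have ia : index a s < size s by rewrite index_mem.
  have ib : index b s < size s by rewrite index_mem.
  apply/existsP; exists (Ordinal ia); apply/existsP; exists (Ordinal ib).
  by rewrite /= !nth_rcons ltnn eqxx ia ib !nth_index.
have /existsP[j /existsP[k /eqP sum_i]] : [exists j : 'I_i, exists k : 'I_i,
    nth 0 s i == nth 0 s j + nth 0 s k].
  by apply: sums; rewrite mem_iota i_gt0 add1n prednK.
apply/existsP; exists j; apply/existsP; exists k.
by rewrite !nth_rcons i_lt !(ltn_trans (ltn_ord _) i_lt) sum_i.
Qed.

Lemma chain_produces_double t s N : chain_produces s N ->
  exists s', [/\ chain_produces s' (N * 2 ^ t), size s' = size s + t
               & {subset s <= s'}].
Proof.
elim: t s N => [|t IH] s N chain_s.
  by exists s; rewrite expn0 muln1 addn0; split.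
have chain_s2 := chain_produces_rcons chain_s (chain_produces_memN chain_s)
                                      (chain_produces_memN chain_s).
have [s' [chain_s' size_s' sub_s']] := IH _ _ chain_s2.
exists s'; split.
- by rewrite expnS mulnA muln2 -addnn.
- by rewrite size_s' size_rcons addSnnS.
- by move=> x x_s; apply: sub_s'; rewrite mem_rcons inE x_s orbT.
Qed.

Lemma chain_mersenne_double h s : chain_produces s (2 ^ h - 1) ->
  exists2 s', chain_produces s' (2 ^ h.*2 - 1) & size s' = size s + h + 1.
Proof.
move=> chain_s.
have [s' [chain_s' size_s' sub_s']] := chain_produces_double h chain_s.
have := chain_produces_rcons chain_s' (chain_produces_memN chain_s')
                             (sub_s' _ (chain_produces_memN chain_s)).
have -> : (2 ^ h - 1) * 2 ^ h + (2 ^ h - 1) = 2 ^ h.*2 - 1.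
  by rewrite -addnn expnD; have := expn_gt0 2 h; nia.
by move=> chain_s''; eexists; first exact: chain_s''; rewrite size_rcons size_s' addn1.
Qed.

Lemma chain_mersenne_succ k s : chain_produces s (2 ^ k - 1) ->
  exists2 s', chain_produces s' (2 ^ k.+1 - 1) & size s' = size s + 2.
Proof.
move=> chain_s.
have chain_s2 := chain_produces_rcons chain_s (chain_produces_memN chain_s)
                                      (chain_produces_memN chain_s).
have := chain_produces_rcons chain_s2 (chain_produces_memN chain_s2)
                             (chain_produces_mem1 chain_s2).
have -> : 2 ^ k - 1 + (2 ^ k - 1) + 1 = 2 ^ k.+1 - 1.
  by rewrite expnS; have := expn_gt0 2 k; lia.
by move=> chain_s3; eexists; first exact: chain_s3; rewrite !size_rcons addn2.
Qed.

Lemma chain_mersenne n m : 0 < n -> n < 2 ^ m.+1 ->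
  exists2 s, chain_produces s (2 ^ n - 1) & size s <= n + 2 * m + 2.
Proof.
elim/ltn_ind: n m => n IH m n_gt0 n_lt.
have [n_le1 | n_gt1] := leqP n 1.
  have -> : n = 1 by lia.
  by exists [:: 1]; rewrite ?addnA ?leq_addr.
case: m n_lt => [|m] n_lt; first by rewrite expn1 in n_lt; lia.
have h_lt : n./2 < 2 ^ m.+1 by rewrite expnS in n_lt; lia.
have [s chain_s size_s] := IH n./2 ltac:(lia) m ltac:(lia) h_lt.
have [s' chain_s' size_s'] := chain_mersenne_double chain_s.
have n_eq := odd_double_half n.
case: (odd n) n_eq => n_eq.
- have [s'' chain_s'' size_s''] := chain_mersenne_succ chain_s'.
  by exists s''; rewrite -n_eq // size_s'' size_s'; lia.
- by exists s'; rewrite -n_eq ?add0n // size_s'; lia.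
Qed.

Lemma iota_ac_mersenne n m : 0 < n -> n < 2 ^ m.+1 ->
  iota_ac (2 ^ n - 1) <= n + 2 * m + 1.
Proof.
move=> n_gt0 n_lt; have [s chain_s size_s] := chain_mersenne n_gt0 n_lt.
by apply: leq_trans (iota_ac_le chain_s) _; lia.
Qed.

Lemma nhalfE n j : nhalf n j = n %/ 2 ^ j.
Proof.
elim: j => [|j IH] /=; first by rewrite divn1.
rewrite IH expnS mulnC divnMA; have := odd_double_half (n %/ 2 ^ j); lia.
Qed.

Local Open Scope ring_scope.

Lemma xi_lt1 (R : realType) n j : @xi R n j < 1.
Proof.
have pow_gt0 : (0 : R) < 2 ^+ j by rewrite exprn_gt0.
rewrite /xi nhalfE ltrBlDr ltr_pdivrMr // -(natrX R 2 j) addrC natr1 -natrM.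
rewrite ltr_nat mulSn addnC {1}(divn_eq n (2 ^ j)) ltn_add2l.
by rewrite ltn_mod expn_gt0.
Qed.

Lemma flog2_spec (R : realType) n : (0 < n)%N ->
  exists k : nat, @flog2 R n = k%:Z /\ (n < 2 ^ k.+1)%N.
Proof.
move=> n_gt0.
have ln2_gt0 : (0 : R) < ln 2 by rewrite ln_gt0 // ltr1n.
have log_ge0 : (0 : R) <= ln (n%:R : R) / ln 2.
  by apply: divr_ge0; [rewrite ln_ge0 // ler1n | exact: ltW].
have := floorD1_gt (ln (n%:R : R) / ln 2); have := floor_ge0 (ln (n%:R : R) / ln 2).
rewrite log_ge0 /flog2; case: Num.floor => // k _ log_lt; exists k; split => //.
rewrite -(ltr_nat R) natrX -ltr_ln ?posrE ?exprn_gt0 ?ltr0n // lnXn //.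
rewrite -[ln 2 *+ _]mulr_natr mulrC -ltr_pdivrMr // -[k.+1%:R]natr1.
by move: log_lt; rewrite intrD.
Qed.

Theorem mainTheorem1 (R : realType) (n : nat) (hn : (64 <= n)%N) :
  ((iota_ac (2 ^ n - 1)%N)%:R : R) <=
    n%:R + 1 - (\sum_(1 <= j < (absz (@flog2 R n)).+1) @xi R n j)
    + 3 * (@flog2 R n)%:~R.
Proof.
have n_gt0 : (0 < n)%N by apply: leq_trans hn.
have [k [-> n_lt]] := flog2_spec R n_gt0.
have xi_sum : \sum_(1 <= j < k.+1) @xi R n j <= k%:R.
  apply: le_trans (ler_sum _ (fun j _ => ltW (xi_lt1 R n j))) _.
  by rewrite sumr_const_nat subn1.
apply: (@le_trans _ _ (n + 2 * k + 1)%:R).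
  by rewrite ler_nat; exact: iota_ac_mersenne.
by rewrite !natrD addr0 -pmulrn; lra.
Qed.
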